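(* Assume no dense set exists, let $\mathcal O\subseteq V$ with $|\mathcal O|\le k$ and $f(\mathcal O)=\mathrm{OPT}$, and let $S'\subseteq V$ satisfy $f(S')\le\alpha\,\mathrm{OPT}$ with $\alpha=3\cdot10^{-3}$. Let $\epsilon=10^{-8}$ and $G=\{o\in\mathcal O: f(o\mid S')\ge\frac{1+\epsilon}{2}\cdot\frac{\mathrm{OPT}}{k}\}$. Then $|G|\ge\eta k$.
   Context: $V$ is a finite ground set; $f:2^V\to\mathbb{R}_{\ge0}$ is monotone, submodular and normalized; $f(e\mid Y)=f(Y\cup\{e\})-f(Y)$. $k$ is a positive integer, $\mathrm{OPT}=\max\{f(S):S\subseteq V,|S|\le k\}$. A set $D$ is dense if $|D|\le\eta k$ and $f(D)\ge\frac{1-\gamma}{2}\mathrm{OPT}$, where $\gamma=10^{-2}$, $\eta=5\cdot10^{-5}$. *)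

From HB Require Import structures.
From mathcomp Require Import all_boot all_order all_algebra.
Set Implicit Arguments. Unset Strict Implicit. Unset Printing Implicit Defensive.
Import Order.TTheory GRing.Theory Num.Theory.
Local Open Scope ring_scope.

Section Sub.
Variables (R : realFieldType) (V : finType).
Implicit Types (f : {set V} -> R) (A B : {set V}).

Definition marg f (e : V) (Y : {set V}) : R := f (e |: Y) - f Y.

Definition monotone_set f := forall A B, A \subset B -> f A <= f B.
Definition submodular f := forall A B, f (A :|: B) + f (A :&: B) <= f A + f B.
Definition normalized f := f set0 = 0.
Definition nonneg_fun f := forall A, 0 <= f A.

(* OPT = max { f S : |S| <= k } (f nonnegative, so 0 is a harmless seed) *)
Definition OPT f (k : nat) : R :=
  \big[Num.max/0]_(S : {set V} | (#|S| <= k)%N) f S.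
End Sub.

Definition gamma_c {R : realFieldType} : R := 1 / (10%:R ^+ 2).
Definition eta_c {R : realFieldType} : R := 5%:R / (10%:R ^+ 5).
Definition alpha_c {R : realFieldType} : R := 3%:R / (10%:R ^+ 3).
Definition eps_c {R : realFieldType} : R := 1 / (10%:R ^+ 8).

Definition dense {R : realFieldType} {V : finType} (f : {set V} -> R) (k : nat)
  (D : {set V}) : Prop :=
  (#|D|%:R <= (eta_c : R) * k%:R) /\ ((1 - (gamma_c : R)) / 2%:R * OPT f k <= f D).

From HB Require Import structures.
From mathcomp Require Import all_boot all_order all_algebra.
From mathcomp Require Import lra.
Import Order.TTheory GRing.Theory Num.Theory.
Set Implicit Arguments. Unset Strict Implicit.
Local Open Scope ring_scope.

(* Submodularity gives OPT = f(O) <= f(G) + f(S') + sum_{o in O\G} f(o | S'),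
   and the last sum is at most k (1+eps)/2 OPT/k = (1+eps)/2 OPT.  With
   f(S') <= alpha OPT this forces f(G) >= (1/2 - alpha - eps/2) OPT, which is
   at least (1-gamma)/2 OPT.  So if |G| < eta k, then G would be dense. *)

Section Submodular.
Variables (R : realFieldType) (V : finType) (f : {set V} -> R).
Hypotheses (f_mono : monotone_set f) (f_sub : submodular f).

Lemma marg_antimono (x : V) {A C : {set V}} :
  A \subset C -> marg f x C <= marg f x A.
Proof.
move=> AC; rewrite /marg.
have xAC : (x |: A) :|: C = x |: C by rewrite -setUA (setUidPr AC).
have A_sub : A \subset (x |: A) :&: C by rewrite subsetI subsetUr AC.
have := f_sub (x |: A) C; have := f_mono A_sub; rewrite xAC; lra.
Qed.

Lemma f_setU_le_sum_marg (A B : {set V}) :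
  f (A :|: B) <= f A + \sum_(o in B) marg f o A.
Proof.
elim: {B}_.+1 {-2}B (ltnSn #|B|) => // n IH B cardB.
have [-> | [x xB]] := set_0Vmem B; first by rewrite setU0 big_set0 addr0.
have cardBx : (#|B :\ x| < n)%N by move: cardB; rewrite (cardsD1 x B) xB.
rewrite (big_setD1 _ xB) /=.
have -> : A :|: B = x |: (A :|: B :\ x) by rewrite setUCA setD1K.
have := marg_antimono x (subsetUl A (B :\ x)).
have := IH _ cardBx; rewrite /marg; lra.
Qed.

Hypothesis f_nonneg : nonneg_fun f.

Lemma f_setU_le_add (A B : {set V}) : f (A :|: B) <= f A + f B.
Proof. have := f_sub A B; have := f_nonneg (A :&: B); lra. Qed.

Lemma f_le_high_gain_add (c : R) (O S : {set V}) : 0 <= c ->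
  f O <= f [set o in O | c <= marg f o S] + f S + #|O|%:R * c.
Proof.
move=> c_ge0; set G := [set o in O | c <= marg f o S].
have O_sub : O \subset (G :|: S) :|: (O :\: G).
  by apply/subsetP => o oO; rewrite !inE oO /=; case: (c <= _); rewrite ?orbT.
have low_gain : \sum_(o in O :\: G) marg f o (G :|: S) <= #|O :\: G|%:R * c.
  rewrite -sum1_card natr_sum mulr_suml; apply: ler_sum => o.
  rewrite !inE mul1r => /andP [oG oO]; rewrite oO /= -ltNge in oG.
  exact: le_trans (marg_antimono o (subsetUr G S)) (ltW oG).
have card_le : #|O :\: G|%:R * c <= #|O|%:R * c.
  by rewrite ler_wpM2r // ler_nat subset_leq_card // subsetDl.
have := f_mono O_sub; have := f_setU_le_sum_marg (G :|: S) (O :\: G).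
have := f_setU_le_add G S; lra.
Qed.

End Submodular.

Lemma alpha_eps_le_gamma {R : realFieldType} :
  (alpha_c : R) + eps_c / 2%:R <= gamma_c / 2%:R.
Proof. rewrite /alpha_c /eps_c /gamma_c -!natrX; lra. Qed.

Theorem mainTheorem11 (R : realFieldType) (V : finType) (f : {set V} -> R)
  (k : nat) (O S' : {set V})
  (f_nonneg : nonneg_fun f) (f_mono : monotone_set f)
  (f_sub : submodular f) (f_norm : normalized f)
  (k_pos : (0 < k)%N)
  (no_dense : ~ exists D : {set V}, dense f k D)
  (O_card : (#|O| <= k)%N) (O_opt : f O = OPT f k)
  (S'_small : f S' <= (alpha_c : R) * OPT f k) :
  (eta_c : R) * k%:R <=
    #|[set o in O | (1 + (eps_c : R)) / 2%:R * (OPT f k / k%:R) <= marg f o S']|%:R.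
Proof.
set P := OPT f k; set c := (1 + eps_c) / 2%:R * (P / k%:R).
rewrite leNgt; apply/negP => G_small; apply: no_dense.
exists [set o in O | c <= marg f o S']; split; first exact: ltW.
have P_ge0 : 0 <= P by rewrite /P -O_opt.
have k_gt0 : (0 : R) < k%:R by rewrite ltr0n.
have c_ge0 : 0 <= c.
  by rewrite /c /eps_c -natrX mulr_ge0 ?divr_ge0 ?(ltW k_gt0) //; lra.
have kc : k%:R * c = (1 + eps_c) / 2%:R * P.
  by rewrite /c mulrCA [k%:R * _]mulrC divfK ?gt_eqF.
have Oc : #|O|%:R * c <= k%:R * c by rewrite ler_wpM2r // ler_nat.
have := f_le_high_gain_add f_mono f_sub f_nonneg O S' c_ge0.
have := ler_wpM2r P_ge0 (@alpha_eps_le_gamma R).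
move: S'_small; rewrite O_opt -/P kc in Oc *; lra.
Qed.
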